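(* If a group $G$ has a normal subgroup $N$ which is residually solvable and such that $G/N$ is amenable, then $G$ is residually amenable. If a group $G$ has a normal subgroup $N$ which is residually solvable and such that $G/N$ is elementary amenable, then $G$ is residually elementary amenable.
   Context: Groups are discrete. For a class $\mathcal{C}$ of groups, a group $G$ is residually $\mathcal{C}$ if for every $g\in G\setminus\{e\}$ there exist $C\in\mathcal{C}$ and a surjective homomorphism $\varphi\colon G\to C$ with $\varphi(g)\neq e$. Elementary amenable groups form the smallest class containing finite and solvable groups and closed under subgroups, quotients, extensions and direct limits. *)

From Stdlib Require Import Reals List.
Set Implicit Arguments.

Record Group := {
  gcar :> Type;
  gmul : gcar -> gcar -> gcar;
  gone : gcar;
  ginv : gcar -> gcar;
  gmulA : forall x y z, gmul x (gmul y z) = gmul (gmul x y) z;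
  gmul1 : forall x, gmul gone x = x;
  gmulV : forall x, gmul (ginv x) x = gone }.
Arguments gmul {_} _ _.
Arguments gone {_}.
Arguments ginv {_} _.

Definition is_hom {G H : Group} (f : G -> H) : Prop :=
  forall x y, f (gmul x y) = gmul (f x) (f y).
Definition injective {A B : Type} (f : A -> B) : Prop := forall x y, f x = f y -> x = y.
Definition surjective {A B : Type} (f : A -> B) : Prop := forall y, exists x, f x = y.

(* N --i--> G --p--> Q is a short exact sequence: i injective hom, p surjective
   hom, ker p = im i.  Thus N is (isomorphic to) a normal subgroup of G and
   Q is (isomorphic to) G/N. *)
Definition short_exact {N G Q : Group} (i : N -> G) (p : G -> Q) : Prop :=
  is_hom i /\ is_hom p /\ injective i /\ surjective p /\
  (forall x, p x = gone <-> exists n, i n = x).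

Definition residually (C : Group -> Prop) (G : Group) : Prop :=
  forall g : G, g <> gone ->
    exists (H : Group) (f : G -> H), C H /\ is_hom f /\ surjective f /\ f g <> gone.

Inductive gen {G : Group} (A : G -> Prop) : G -> Prop :=
| gen_in : forall a, A a -> gen A a
| gen_one : gen A gone
| gen_mul : forall a b, gen A a -> gen A b -> gen A (gmul a b)
| gen_inv : forall a, gen A a -> gen A (ginv a).

Definition commg {G : Group} (x y : G) : G :=
  gmul (gmul (ginv x) (ginv y)) (gmul x y).

Fixpoint derived (G : Group) (n : nat) : G -> Prop :=
  match n with
  | O => fun _ => True
  | S k => gen (fun z => exists x y, derived G k x /\ derived G k y /\ z = commg x y)
  end.

Definition solvable (G : Group) : Prop :=
  exists n, forall x, derived G n x -> x = gone.

Definition finite_group (G : Group) : Prop :=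
  exists l : list G, forall x, In x l.

Definition amenable (G : Group) : Prop :=
  exists m : (G -> Prop) -> R,
    m (fun _ => True) = 1%R /\
    (forall A, (0 <= m A)%R) /\
    (forall A B, (forall x, A x -> B x -> False) ->
        m (fun x => A x \/ B x) = (m A + m B)%R) /\
    (forall (g : G) A, m (fun x => A (gmul (ginv g) x)) = m A).

Definition is_direct_limit {I : Type} (le : I -> I -> Prop) (Gs : I -> Group)
  (f : forall i j, le i j -> Gs i -> Gs j) (L : Group) (g : forall i, Gs i -> L) : Prop :=
  (exists i : I, True) /\
  (forall i, le i i) /\
  (forall i j k, le i j -> le j k -> le i k) /\
  (forall i j, exists k, le i k /\ le j k) /\
  (forall i j h, is_hom (f i j h)) /\
  (forall i h x, f i i h x = x) /\
  (forall i j k hij hjk hik x, f j k hjk (f i j hij x) = f i k hik x) /\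
  (forall i, is_hom (g i)) /\
  (forall i j h x, g j (f i j h x) = g i x) /\
  (forall y : L, exists i x, g i x = y) /\
  (forall i x, g i x = gone <-> exists j h, f i j h x = gone).

Definition EA_closed (C : Group -> Prop) : Prop :=
  (forall G, finite_group G -> C G) /\
  (forall G, solvable G -> C G) /\
  (forall (H G : Group) (f : H -> G), is_hom f -> injective f -> C G -> C H) /\
  (forall (G H : Group) (f : G -> H), is_hom f -> surjective f -> C G -> C H) /\
  (forall (N G Q : Group) (i : N -> G) (p : G -> Q),
      short_exact i p -> C N -> C Q -> C G) /\
  (forall (I : Type) le (Gs : I -> Group) f (L : Group) g,
      is_direct_limit le Gs f L g -> (forall i, C (Gs i)) -> C L).

Definition elementary_amenable (G : Group) : Prop :=
  forall C, EA_closed C -> C G.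

(* Let g <> 1 in G.  If p g <> 1, the quotient p : G -> Q detects g.  Otherwise
   g = i n with n <> 1, and residual solvability gives k with n outside the
   derived subgroup N^(k).  That subgroup is characteristic in N, hence normal
   in G, and G/N^(k) is obtained from a quotient of Q by k successive
   extensions by the abelian groups N^(j)/N^(j+1).  So it suffices that both
   classes contain the abelian groups and are closed under quotients and
   extensions.  For elementary amenable groups this is built into the
   definition.  For amenable groups, an abelian group carries an invariant mean
   obtained as an ultralimit of means averaged over longer and longer runs of
   powers of more and more elements, and an extension carries the mean
   obtained by integrating the invariant means of the cosets of N against the
   invariant mean of Q. *)

From Stdlib Require Import Reals Lra Lia ZArith List.
From Stdlib Require Import Classical ClassicalEpsilon FunctionalExtensionality.
From Stdlib Require Import PropExtensionality ProofIrrelevance.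
From mathcomp Require all_boot boolp classical_sets filter.

Section GroupFacts.
Variable G : Group.
Implicit Types x y z : G.

Lemma gmulV_r x : gmul x (ginv x) = gone.
Proof.
  transitivity (gmul (gmul (ginv (ginv x)) (ginv x)) (gmul x (ginv x))).
  - rewrite gmulV, gmul1. reflexivity.
  - rewrite <- gmulA, (gmulA G (ginv x) x), gmulV, gmul1, gmulV. reflexivity.
Qed.

Lemma gmul1_r x : gmul x gone = x.
Proof. rewrite <- (gmulV G x), gmulA, gmulV_r, gmul1. reflexivity. Qed.

Lemma ginv_inv x : ginv (ginv x) = x.
Proof.
  rewrite <- (gmul1_r (ginv (ginv x))), <- (gmulV G x), gmulA, gmulV, gmul1.
  reflexivity.
Qed.

Lemma gmul_cancel_l x y z : gmul x y = gmul x z -> y = z.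
Proof.
  intro E. rewrite <- (gmul1 G y), <- (gmul1 G z), <- (gmulV G x), <- !gmulA, E.
  reflexivity.
Qed.

Lemma ginv_unique x y : gmul x y = gone -> y = ginv x.
Proof. intro E. apply (gmul_cancel_l x). rewrite E, gmulV_r. reflexivity. Qed.

Lemma ginv_mul x y : ginv (gmul x y) = gmul (ginv y) (ginv x).
Proof.
  symmetry. apply ginv_unique.
  rewrite <- gmulA, (gmulA G y (ginv y)), gmulV_r, gmul1, gmulV_r. reflexivity.
Qed.

Lemma ginv_one : ginv (@gone G) = gone.
Proof. rewrite <- (gmul1_r (ginv gone)), gmulV. reflexivity. Qed.

Lemma gmulKV x y : gmul (ginv x) (gmul x y) = y.
Proof. rewrite gmulA, gmulV, gmul1. reflexivity. Qed.

Lemma gmulVK x y : gmul x (gmul (ginv x) y) = y.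
Proof. rewrite gmulA, gmulV_r, gmul1. reflexivity. Qed.
End GroupFacts.

Ltac gsimp :=
  repeat rewrite ?ginv_mul, ?ginv_inv, ?ginv_one, <- ?gmulA, ?gmul1, ?gmul1_r,
    ?gmulV, ?gmulV_r, ?gmulKV, ?gmulVK.

Section HomFacts.
Variables G H : Group.
Variable f : G -> H.
Hypothesis hf : is_hom f.

Lemma hom_one : f gone = gone.
Proof. apply (gmul_cancel_l H (f gone)). rewrite <- hf, gmul1, gmul1_r. reflexivity. Qed.

Lemma hom_inv x : f (ginv x) = ginv (f x).
Proof. apply ginv_unique. rewrite <- hf, gmulV_r, hom_one. reflexivity. Qed.
End HomFacts.

Definition abelian (G : Group) : Prop := forall x y : G, gmul x y = gmul y x.

Lemma pred_ext {T : Type} (A B : T -> Prop) : (forall x, A x <-> B x) -> A = B.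
Proof.
  intro E. apply functional_extensionality. intro x.
  apply propositional_extensionality, E.
Qed.

(** * Ultrafilters and ultralimits *)

Definition ultrafilter {J : Type} (U : (J -> Prop) -> Prop) : Prop :=
  (forall A B, U A -> U B -> U (fun j => A j /\ B j)) /\
  (forall A B : J -> Prop, (forall j, A j -> B j) -> U A -> U B) /\
  ~ U (fun _ => False) /\
  (forall A, U A \/ U (fun j => ~ A j)).

Module UltrafilterLemma.
Import all_boot boolp classical_sets filter.

Lemma ultrafilter_extension (J : Type) (F : (J -> Prop) -> Prop) :
  F (fun _ => True) ->
  (forall A B, F A -> F B -> F (fun j => A j /\ B j)) ->
  (forall A B : J -> Prop, (forall j, A j -> B j) -> F A -> F B) ->
  ~ F (fun _ => False) ->
  exists U, ultrafilter U /\ forall A, F A -> U A.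
Proof.
move=> FT FI FS F0.
have PF : ProperFilter F.
  constructor; first exact: F0.
  by constructor; [exact: FT | move=> A B; exact: FI | move=> A B; exact: FS].
have [U [UU FU]] := ultraFilterLemma PF.
exists U; split=> //; split; [|split; [|split]].
- by move=> A B; exact: (@filterI _ U _ A B).
- by move=> A B AB; exact: (@filterS _ U _ A B AB).
- exact: (@filter_not_empty _ U _).
- by move=> A; exact: (@in_ultra_setVsetC _ U A UU).
Qed.
End UltrafilterLemma.

Open Scope R_scope.

Lemma Rabs_le_inv x a : Rabs x <= a -> - a <= x <= a.
Proof. intro H. pose proof (Rle_abs x). pose proof (Rle_abs (- x)). rewrite Rabs_Ropp in *. lra. Qed.

Lemma Rabs_le_eps_eq x y : (forall eps, 0 < eps -> Rabs (x - y) <= eps) -> x = y.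
Proof.
  intro H. apply Rle_antisym; apply Rle_plus_epsilon; intros eps He;
    destruct (Rabs_le_inv _ _ (H eps He)); lra.
Qed.

Section Ultralimits.
Variable J : Type.
Variable U : (J -> Prop) -> Prop.
Hypothesis hU : ultrafilter U.

Let UI : forall A B, U A -> U B -> U (fun j => A j /\ B j). Proof. apply hU. Qed.
Let US : forall A B : J -> Prop, (forall j, A j -> B j) -> U A -> U B. Proof. apply hU. Qed.

Lemma ultrafilter_nonempty A : U A -> exists j, A j.
Proof.
  intro HA. apply NNPP. intro H. apply hU. apply (US A); [|exact HA].
  intros j Aj. apply H. eauto.
Qed.

Lemma ultrafilter_True : U (fun _ => True).
Proof.
  destruct (proj2 (proj2 (proj2 hU)) (fun _ => True)) as [H|H]; [exact H|].
  exfalso. apply hU. apply (US _ _ (fun j (n : ~ True) => n I) H).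
Qed.

Definition ulim (f : J -> R) (l : R) : Prop :=
  forall eps, 0 < eps -> U (fun j => Rabs (f j - l) < eps).

Lemma ulim_unique f l1 l2 : ulim f l1 -> ulim f l2 -> l1 = l2.
Proof.
  intros H1 H2. apply NNPP. intro Hne.
  set (e := Rabs (l1 - l2) / 2).
  assert (He : 0 < e) by (unfold e; assert (l1 - l2 <> 0) by lra; pose proof (Rabs_pos_lt _ H); lra).
  destruct (ultrafilter_nonempty _ (UI _ _ (H1 e He) (H2 e He))) as [j [a b]].
  assert (Rabs (l1 - l2) <= Rabs (f j - l1) + Rabs (f j - l2)).
  { replace (l1 - l2) with (- (f j - l1) + (f j - l2)) by ring.
    eapply Rle_trans; [apply Rabs_triang|]. rewrite Rabs_Ropp. lra. }
  unfold e in *. lra.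
Qed.

(* The ultralimit is the supremum of the reals that [f] eventually exceeds. *)
Lemma ulim_exists f : (forall j, 0 <= f j <= 1) -> exists l, ulim f l.
Proof.
  intro Hf.
  set (E := fun t => U (fun j => t <= f j)).
  assert (Eb : bound E).
  { exists 1. intros t Et. apply NNPP. intro Hn. apply hU. apply (US _ _) with (2 := Et).
    intros j Hj. specialize (Hf j). lra. }
  assert (Ene : exists t, E t).
  { exists 0. apply (US _ _) with (2 := ultrafilter_True). intros j _. apply Hf. }
  destruct (completeness E Eb Ene) as [l [Hub Hlub]].
  exists l. intros eps Heps.
  assert (Lo : U (fun j => l - eps < f j)).
  { apply NNPP. intro Hn.
    assert (forall t, E t -> t <= l - eps).
    { intros t Et. apply Rnot_lt_le. intro Hlt. apply Hn. apply (US _ _) with (2 := Et).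
      intros j Hj. lra. }
    pose proof (Hlub (l - eps) H). lra. }
  assert (Hi : U (fun j => f j < l + eps)).
  { destruct (proj2 (proj2 (proj2 hU)) (fun j => f j < l + eps)) as [H|H]; [exact H|].
    assert (E (l + eps)) by (apply (US _ _) with (2 := H); intros j Hj; lra).
    pose proof (Hub _ H0). lra. }
  apply (US _ _) with (2 := UI _ _ Lo Hi). intros j [a b]. apply Rabs_def1; lra.
Qed.

Lemma ulim_const c : ulim (fun _ => c) c.
Proof.
  intros eps He. apply (US _ _) with (2 := ultrafilter_True).
  intros. rewrite Rminus_diag, Rabs_R0. exact He.
Qed.

Lemma ulim_plus f g lf lg : ulim f lf -> ulim g lg -> ulim (fun j => f j + g j) (lf + lg).
Proof.
  intros Hf Hg eps He.
  apply (US _ _) with (2 := UI _ _ (Hf (eps / 2) ltac:(lra)) (Hg (eps / 2) ltac:(lra))).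
  intros j [a b]. replace (f j + g j - (lf + lg)) with ((f j - lf) + (g j - lg)) by ring.
  eapply Rle_lt_trans; [apply Rabs_triang|]. lra.
Qed.
End Ultralimits.

Definition is_mean {T : Type} (m : (T -> Prop) -> R) : Prop :=
  m (fun _ => True) = 1 /\ (forall A, 0 <= m A) /\
  (forall A B, (forall x, A x -> B x -> False) -> m (fun x => A x \/ B x) = m A + m B).

Definition translate {G : Group} (g : G) (A : G -> Prop) : G -> Prop :=
  fun x => A (gmul (ginv g) x).

Lemma amenableP (G : Group) :
  amenable G <-> exists m, is_mean m /\ forall (g : G) A, m (translate g A) = m A.
Proof.
  split.
  - intros [m [m1 [m0 [madd minv]]]]. exists m. repeat split; assumption.
  - intros [m [[m1 [m0 madd]] minv]]. exists m. repeat split; assumption.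
Qed.

Section MeanFacts.
Variable T : Type.
Variable m : (T -> Prop) -> R.
Hypothesis hm : is_mean m.

Lemma mean_True : m (fun _ => True) = 1.
Proof. apply hm. Qed.

Lemma mean_ge0 A : 0 <= m A.
Proof. apply hm. Qed.

Lemma mean_add A B :
  (forall x, A x -> B x -> False) -> m (fun x => A x \/ B x) = m A + m B.
Proof. apply hm. Qed.

Lemma mean_ext A B : (forall x, A x <-> B x) -> m A = m B.
Proof. intro E. rewrite (pred_ext A B E). reflexivity. Qed.

Lemma mean_False : m (fun _ => False) = 0.
Proof.
  pose proof (mean_add (fun _ => False) (fun _ => False) (fun _ f _ => f)) as E.
  cbv beta in E.
  rewrite (mean_ext (fun _ => False \/ False) (fun _ => False)) in E by tauto. lra.
Qed.

Lemma mean_mono A B : (forall x, A x -> B x) -> m A <= m B.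
Proof.
  intro AB.
  pose proof (mean_add A (fun x => B x /\ ~ A x) (fun x a b => proj2 b a)) as E.
  cbv beta in E.
  rewrite (mean_ext (fun x => A x \/ (B x /\ ~ A x)) B) in E.
  - pose proof (mean_ge0 (fun x => B x /\ ~ A x)). lra.
  - intro x. split; [intros [a|[b _]]; auto|intro b; destruct (classic (A x)); auto].
Qed.

Lemma mean_le1 A : m A <= 1.
Proof. rewrite <- mean_True. apply mean_mono. auto. Qed.

Lemma mean_range A : 0 <= m A <= 1.
Proof. split; [apply mean_ge0|apply mean_le1]. Qed.
End MeanFacts.

Lemma dirac_mean {T : Type} (x0 : T) :
  is_mean (fun A => if excluded_middle_informative (A x0) then 1 else 0).
Proof.
  split; [|split].
  - destruct (excluded_middle_informative True); tauto.
  - intro A. destruct (excluded_middle_informative (A x0)); lra.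
  - intros A B D.
    destruct (excluded_middle_informative (A x0)), (excluded_middle_informative (B x0)),
      (excluded_middle_informative (A x0 \/ B x0)); try tauto; try lra.
    exfalso. eauto.
Qed.

Lemma amenable_image (G H : Group) (f : G -> H) :
  is_hom f -> surjective f -> amenable G -> amenable H.
Proof.
  intros hf sf. rewrite !amenableP. intros [m [[m1 [m0 madd]] minv]].
  exists (fun B => m (fun x => B (f x))). split; [split; [|split]|].
  - exact m1.
  - intro B. apply m0.
  - intros A B D. apply (madd (fun x => A (f x)) (fun x => B (f x))). intro x. apply D.
  - intros h B. destruct (sf h) as [g <-].
    rewrite <- (minv g (fun x => B (f x))). unfold translate.
    rewrite (pred_ext (fun x => B (gmul (ginv (f g)) (f x))) (fun x => B (f (gmul (ginv g) x))));
      [reflexivity|].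
    intro x. rewrite hf, (hom_inv G H f hf). reflexivity.
Qed.

Lemma mean_ultralimit (J T : Type) (U : (J -> Prop) -> Prop) (mu : J -> (T -> Prop) -> R) :
  ultrafilter U -> (forall j, is_mean (mu j)) ->
  exists m, is_mean m /\ forall B, ulim J U (fun j => mu j B) (m B).
Proof.
  intros hU hmu.
  assert (Hl : forall B, exists l, ulim J U (fun j => mu j B) l)
    by (intro B; apply ulim_exists; [exact hU|]; intro j; apply mean_range, hmu).
  destruct (choice _ Hl) as [m Hm]. exists m.
  split; [split; [|split]|exact Hm].
  - apply (ulim_unique J U hU (fun j => mu j (fun _ => True))); [apply Hm|].
    rewrite (functional_extensionality _ (fun _ => 1)) by (intro j; apply mean_True, hmu).
    apply ulim_const, hU.
  - intro B. apply Rnot_lt_le. intro Hlt.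
    destruct (ultrafilter_nonempty J U hU _ (Hm B (- m B) ltac:(lra))) as [j Hj].
    pose proof (mean_ge0 _ _ (hmu j) B). apply Rabs_def2 in Hj. lra.
  - intros A B D. apply (ulim_unique J U hU (fun j => mu j (fun x => A x \/ B x))); [apply Hm|].
    rewrite (functional_extensionality _ (fun j => mu j A + mu j B))
      by (intro j; apply mean_add; [apply hmu|exact D]).
    apply ulim_plus; [exact hU|apply Hm|apply Hm].
Qed.

(** * Abelian groups are amenable *)

Definition almost_invariant {G : Group} (mu : (G -> Prop) -> R) (g : G) (e : R) : Prop :=
  forall B, Rabs (mu (translate g B) - mu B) <= e.

(* Index the means by (n, L); the sets containing all (n, L) with n large and
   L large generate a proper filter, and an ultrafilter refining it picks the
   limit mean. *)
Lemma amenable_of_almost_invariant (G : Group) :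
  (forall (n : nat) (L : list G), (0 < n)%nat ->
     exists mu, is_mean mu /\ forall g, In g L -> almost_invariant mu g (/ INR n)) ->
  amenable G.
Proof.
  intro H.
  set (J := (nat * list G)%type).
  set (F := fun S : J -> Prop =>
    exists n0 L0, forall n L, (n0 <= n)%nat -> incl L0 L -> S (n, L)).
  destruct (UltrafilterLemma.ultrafilter_extension J F) as [U [hU FU]].
  { exists O, nil. auto. }
  { intros S1 S2 [n1 [L1 H1]] [n2 [L2 H2]]. exists (max n1 n2), (L1 ++ L2).
    intros n L Hn HL. split; [apply H1|apply H2]; try lia;
      intros x Hx; apply HL; apply in_or_app; auto. }
  { intros S1 S2 Hs [n1 [L1 H1]]. exists n1, L1. auto. }
  { intros [n0 [L0 H0]]. apply (H0 n0 L0); [lia|apply incl_refl]. }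
  assert (Hmu : forall j : J, exists mu, is_mean mu /\
    forall g, In g (snd j) -> almost_invariant mu g (/ INR (S (fst j))))
    by (intro j; apply H; lia).
  destruct (choice _ Hmu) as [mu Hmuj].
  destruct (mean_ultralimit J G U mu hU (fun j => proj1 (Hmuj j))) as [m [hm Hm]].
  apply amenableP. exists m. split; [exact hm|]. intros g B.
  apply Rabs_le_eps_eq. intros eps Heps.
  destruct (archimed_cor1 (eps / 3) ltac:(lra)) as [n0 [Hn0 Hn0pos]].
  assert (Hev : U (fun j => (n0 <= fst j)%nat /\ In g (snd j))).
  { apply FU. exists n0, (g :: nil). intros n L Hn HL. split; [exact Hn|apply HL; left; reflexivity]. }
  destruct (ultrafilter_nonempty J U hU _
    (proj1 hU _ _ Hev (proj1 hU _ _ (Hm (translate g B) (eps / 3) ltac:(lra))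
                                      (Hm B (eps / 3) ltac:(lra)))))
    as [[n L] [[Hn Hg] [H1 H2]]].
  cbn [fst snd] in Hn, Hg, H1, H2.
  pose proof (proj2 (Hmuj (n, L)) g Hg B) as Hinv. cbn [fst snd] in Hinv.
  assert (/ INR (S n) <= / INR n0)
    by (apply Rinv_le_contravar; [apply lt_0_INR; lia|apply le_INR; lia]).
  apply Rabs_def2 in H1, H2. apply Rabs_le_inv in Hinv. apply Rabs_le. lra.
Qed.

Fixpoint sumR (n : nat) (h : nat -> R) : R :=
  match n with O => 0 | S k => sumR k h + h k end.

Lemma sumR_ext n h1 h2 : (forall t, (t < n)%nat -> h1 t = h2 t) -> sumR n h1 = sumR n h2.
Proof.
  revert h1 h2. induction n; intros h1 h2 H; simpl; [reflexivity|].
  rewrite (IHn h1 h2), H; auto.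
Qed.

Lemma sumR_plus n h1 h2 : sumR n (fun t => h1 t + h2 t) = sumR n h1 + sumR n h2.
Proof. induction n; simpl; [lra|]. rewrite IHn. lra. Qed.

Lemma sumR_minus n h1 h2 : sumR n (fun t => h1 t - h2 t) = sumR n h1 - sumR n h2.
Proof. induction n; simpl; [lra|]. rewrite IHn. lra. Qed.

Lemma sumR_const n c : sumR n (fun _ => c) = INR n * c.
Proof. induction n; simpl sumR; [simpl; lra|]. rewrite IHn, S_INR. lra. Qed.

Lemma sumR_ge0 n h : (forall t, 0 <= h t) -> 0 <= sumR n h.
Proof. intro H. induction n; simpl; [lra|]. pose proof (H n). lra. Qed.

Lemma sumR_le n h1 h2 : (forall t, h1 t <= h2 t) -> sumR n h1 <= sumR n h2.
Proof. intro H. induction n; simpl; [lra|]. pose proof (H n). lra. Qed.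

Lemma sumR_telescope n c : sumR n (fun t => c (S t)) - sumR n c = c n - c O.
Proof. induction n; simpl; lra. Qed.

Lemma sumR_abs n h : Rabs (sumR n h) <= sumR n (fun t => Rabs (h t)).
Proof.
  induction n; simpl; [rewrite Rabs_R0; lra|].
  eapply Rle_trans; [apply Rabs_triang|]. lra.
Qed.

Fixpoint gpow {G : Group} (b : G) (t : nat) : G :=
  match t with O => gone | S k => gmul b (gpow b k) end.

Definition power_average {G : Group} (mu : (G -> Prop) -> R) (b : G) (n : nat) :
  (G -> Prop) -> R :=
  fun B => / INR n * sumR n (fun t => mu (fun x => B (gmul (gpow b t) x))).

Section PowerAverage.
Variable G : Group.
Variable mu : (G -> Prop) -> R.
Hypothesis hmu : is_mean mu.
Variable n : nat.
Hypothesis n_gt0 : (0 < n)%nat.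

Let n_pos : 0 < INR n. Proof. apply lt_0_INR, n_gt0. Qed.

Lemma power_average_mean b : is_mean (power_average mu b n).
Proof.
  unfold power_average. split; [|split].
  - rewrite (sumR_ext _ _ (fun _ => 1)) by (intros; apply mean_True, hmu).
    rewrite sumR_const. field. lra.
  - intro B. apply Rmult_le_pos; [left; apply Rinv_0_lt_compat, n_pos|].
    apply sumR_ge0. intro. apply mean_ge0, hmu.
  - intros A B D. rewrite <- Rmult_plus_distr_l, <- sumR_plus. f_equal.
    apply sumR_ext. intros t _. apply (mean_add _ mu hmu). intro x. apply D.
Qed.

(* Translating by a shifts the run of powers of a^-1 by one, so only the two
   end terms of the sum survive. *)
Lemma power_average_almost_invariant a :
  almost_invariant (power_average mu (ginv a) n) a (/ INR n).
Proof.
  intro B. unfold power_average, translate.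
  set (c := fun t => mu (fun x => B (gmul (gpow (ginv a) t) x))).
  rewrite (sumR_ext _ _ (fun t => c (S t))).
  2:{ intros t _. unfold c. simpl. f_equal. apply pred_ext. intro x.
      rewrite gmulA. reflexivity. }
  rewrite <- Rmult_minus_distr_l, sumR_telescope.
  pose proof (mean_range _ mu hmu (fun x => B (gmul (gpow (ginv a) n) x))).
  pose proof (mean_range _ mu hmu (fun x => B (gmul (gpow (ginv a) 0) x))).
  rewrite Rabs_mult, Rabs_inv, (Rabs_pos_eq (INR n)) by lra.
  rewrite <- (Rmult_1_r (/ INR n)) at 2.
  apply Rmult_le_compat_l; [left; apply Rinv_0_lt_compat, n_pos|].
  apply Rabs_le. unfold c. lra.
Qed.

Lemma power_average_keeps_almost_invariant b g e :
  abelian G -> almost_invariant mu g e -> almost_invariant (power_average mu b n) g e.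
Proof.
  intros comm Hg B. unfold power_average.
  rewrite <- Rmult_minus_distr_l, <- sumR_minus.
  rewrite Rabs_mult, Rabs_inv, (Rabs_pos_eq (INR n)) by lra.
  apply Rle_trans with (/ INR n * (INR n * e)).
  2:{ right. field. lra. }
  apply Rmult_le_compat_l; [left; apply Rinv_0_lt_compat, n_pos|].
  rewrite <- sumR_const.
  eapply Rle_trans; [apply sumR_abs|]. apply sumR_le. intro t.
  replace (mu (fun x => translate g B (gmul (gpow b t) x)))
    with (mu (translate g (fun x => B (gmul (gpow b t) x)))); [apply Hg|].
  f_equal. apply pred_ext. intro x. unfold translate.
  rewrite !gmulA, (comm (ginv g)). reflexivity.
Qed.
End PowerAverage.

Lemma abelian_almost_invariant_means (A : Group) :
  abelian A -> forall (n : nat) (L : list A), (0 < n)%nat ->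
  exists mu, is_mean mu /\ forall g, In g L -> almost_invariant mu g (/ INR n).
Proof.
  intros comm n L Hn. induction L as [|a L IH].
  - exists (fun B => if excluded_middle_informative (B gone) then 1 else 0).
    split; [apply dirac_mean|intros g []].
  - destruct IH as [mu [hmu Hmu]].
    exists (power_average mu (ginv a) n). split; [apply power_average_mean; assumption|].
    intros g [<-|Hg].
    + apply power_average_almost_invariant; assumption.
    + apply power_average_keeps_almost_invariant; auto.
Qed.

Lemma abelian_amenable (A : Group) : abelian A -> amenable A.
Proof. intro comm. apply amenable_of_almost_invariant, abelian_almost_invariant_means, comm. Qed.

(** * Integration against a mean *)

Definition nat_floor (x : R) : nat := Z.to_nat (Int_part x).

Lemma nat_floor_spec x : 0 <= x -> INR (nat_floor x) <= x < INR (nat_floor x) + 1.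
Proof.
  intro Hx. destruct (base_Int_part x) as [H1 H2].
  assert (0 <= Int_part x)%Z by (apply Z.lt_succ_r, lt_IZR; rewrite succ_IZR; lra).
  unfold nat_floor. rewrite INR_IZR_INZ, Z2Nat.id by assumption. lra.
Qed.

Lemma nat_floor_ge y k : 0 <= y -> INR k <= y -> (k <= nat_floor y)%nat.
Proof.
  intros Hy Hk. destruct (nat_floor_spec y Hy).
  apply Nat.lt_succ_r, INR_lt. rewrite S_INR. lra.
Qed.

Lemma nat_floor_lt y k : 0 <= y -> y < INR k -> (nat_floor y < k)%nat.
Proof. intros Hy Hk. destruct (nat_floor_spec y Hy). apply INR_lt. lra. Qed.

Definition indicator {T : Type} (P : T -> Prop) (x : T) : nat :=
  if excluded_middle_informative (P x) then 1%nat else 0%nat.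

Section NatIntegral.
Variable T : Type.
Variable m : (T -> Prop) -> R.
Hypothesis hm : is_mean m.

(* For f bounded by K, this is the integral of f by the layer-cake formula. *)
Definition nat_integral (K : nat) (f : T -> nat) : R :=
  sumR K (fun j => m (fun x => (S j <= f x)%nat)).

Lemma sumR_level_sets (P : T -> Prop) (f : T -> nat) K :
  sumR K (fun j => m (fun x => P x /\ f x = j)) = m (fun x => P x /\ (f x < K)%nat).
Proof.
  induction K; simpl.
  - rewrite (mean_ext _ m _ (fun _ => False)) by (intro x; lia).
    rewrite (mean_False _ m hm). reflexivity.
  - rewrite IHK, <- (mean_add _ m hm) by (intros x [_ a] [_ b]; lia).
    apply (mean_ext _ m). intro x. destruct (Nat.lt_ge_cases (f x) K); intuition lia.
Qed.

Lemma nat_integral_add_indicator K f (P : T -> Prop) :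
  (forall x, (f x + indicator P x <= K)%nat) ->
  nat_integral K (fun x => (f x + indicator P x)%nat) = nat_integral K f + m P.
Proof.
  intro HK. unfold nat_integral.
  rewrite (sumR_ext _ _ (fun j => m (fun x => (S j <= f x)%nat) + m (fun x => P x /\ f x = j))).
  - rewrite sumR_plus, sumR_level_sets. f_equal. apply (mean_ext _ m). intro x.
    specialize (HK x). unfold indicator in *.
    destruct (excluded_middle_informative (P x)); intuition lia.
  - intros j _. rewrite <- (mean_add _ m hm) by (intros x a [b c]; lia).
    apply (mean_ext _ m). intro x. unfold indicator.
    destruct (excluded_middle_informative (P x)), (Nat.eq_dec (f x) j); intuition lia.
Qed.

Lemma nat_integral_0 K : nat_integral K (fun _ => O) = 0.
Proof.
  unfold nat_integral. rewrite (sumR_ext _ _ (fun _ => 0)), sumR_const; [lra|].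
  intros. rewrite (mean_ext _ m _ (fun _ => False)) by (intro; lia). apply (mean_False _ m hm).
Qed.

(* Induction on a bound B of g, peeling off the indicator of the top level set. *)
Lemma nat_integral_add K f g :
  (forall x, (f x + g x <= K)%nat) ->
  nat_integral K (fun x => (f x + g x)%nat) = nat_integral K f + nat_integral K g.
Proof.
  intro HK. revert f g HK. enough (H : forall B f g, (forall x, (g x <= B)%nat) ->
    (forall x, (f x + g x <= K)%nat) ->
    nat_integral K (fun x => (f x + g x)%nat) = nat_integral K f + nat_integral K g).
  { intros f g HK. apply (H K); [intro x; specialize (HK x); lia|exact HK]. }
  induction B; intros f g HB HK.
  - rewrite (functional_extensionality g (fun _ => O)) in * by (intro x; specialize (HB x); lia).
    rewrite nat_integral_0, (functional_extensionality _ f) by (intro; lia). lra.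
  - set (g1 := fun x => Nat.min (g x) B). set (P := fun x => (S B <= g x)%nat).
    assert (Eg : g = fun x => (g1 x + indicator P x)%nat).
    { apply functional_extensionality. intro x. unfold g1, P, indicator.
      specialize (HB x). destruct (excluded_middle_informative _); lia. }
    rewrite Eg in HK |- *.
    rewrite (functional_extensionality _ (fun x => ((f x + g1 x) + indicator P x)%nat))
      by (intro; lia).
    rewrite !nat_integral_add_indicator by (intro x; specialize (HK x); lia).
    rewrite IHB by (intro x; specialize (HK x); unfold g1 in *; lia). lra.
Qed.

Lemma nat_integral_ge0 K f : 0 <= nat_integral K f.
Proof. apply sumR_ge0. intro. apply (mean_ge0 _ m hm). Qed.

Lemma nat_integral_le K f : nat_integral K f <= INR K.
Proof.
  unfold nat_integral. rewrite <- (Rmult_1_r (INR K)), <- sumR_const.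
  apply sumR_le. intro. apply (mean_le1 _ m hm).
Qed.

Lemma nat_integral_mono K f g :
  (forall x, (f x <= g x)%nat) -> (forall x, (g x <= K)%nat) ->
  nat_integral K f <= nat_integral K g.
Proof.
  intros H HK.
  rewrite (functional_extensionality g (fun x => (f x + (g x - f x))%nat))
    by (intro x; specialize (H x); lia).
  rewrite nat_integral_add by (intro x; specialize (H x); specialize (HK x); lia).
  pose proof (nat_integral_ge0 K (fun x => (g x - f x)%nat)). lra.
Qed.

Lemma nat_integral_widen K K' f :
  (forall x, (f x <= K)%nat) -> (K <= K')%nat -> nat_integral K' f = nat_integral K f.
Proof.
  intros HK HK'. induction HK'; [reflexivity|].
  unfold nat_integral in *. simpl. rewrite IHHK'.
  rewrite (mean_ext _ m _ (fun _ => False)) by (intro x; specialize (HK x); lia).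
  rewrite (mean_False _ m hm). lra.
Qed.

Lemma nat_integral_const K c : (c <= K)%nat -> nat_integral K (fun _ => c) = INR c.
Proof.
  intro Hc. rewrite (nat_integral_widen c K) by auto. clear Hc K.
  induction c; [apply nat_integral_0|].
  assert (E : (fun _ : T => S c) = fun x => (c + indicator (fun _ => True) x)%nat).
  { apply functional_extensionality. intro x. unfold indicator.
    destruct (excluded_middle_informative True); [lia|tauto]. }
  rewrite E, nat_integral_add_indicator.
  - rewrite (nat_integral_widen c (S c)), IHc, (mean_True _ m hm), S_INR; auto.
  - intro x. unfold indicator. destruct (excluded_middle_informative True); lia.
Qed.

Lemma nat_integral_scale k K f :
  (forall x, (k * f x <= K)%nat) ->
  nat_integral K (fun x => (k * f x)%nat) = INR k * nat_integral K f.
Proof.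
  revert K f. induction k; intros K f H.
  - simpl. rewrite nat_integral_0. lra.
  - rewrite (functional_extensionality _ (fun x => (k * f x + f x)%nat)) by (intro; lia).
    rewrite nat_integral_add by (intro x; specialize (H x); lia).
    rewrite IHk by (intro x; specialize (H x); lia). rewrite S_INR. lra.
Qed.

Lemma nat_integral_comp (h : T -> T) :
  (forall A, m (fun x => A (h x)) = m A) ->
  forall K f, nat_integral K (fun x => f (h x)) = nat_integral K f.
Proof.
  intros minv K f. unfold nat_integral. apply sumR_ext. intros j _.
  apply (minv (fun x => (S j <= f x)%nat)).
Qed.
End NatIntegral.

Section LowerSums.
Variable T : Type.
Variable m : (T -> Prop) -> R.
Hypothesis hm : is_mean m.

Notation nat_integral := (nat_integral T m).

Definition lower_sum (n : nat) (phi : T -> R) : R :=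
  nat_integral n (fun x => nat_floor (INR n * phi x)) / INR n.

Lemma lower_sum_range n phi : (0 < n)%nat -> 0 <= lower_sum n phi <= 1.
Proof.
  intro Hn. assert (0 < INR n) by (apply lt_0_INR, Hn).
  pose proof (nat_integral_ge0 T m hm n (fun x => nat_floor (INR n * phi x))).
  pose proof (nat_integral_le T m hm n (fun x => nat_floor (INR n * phi x))).
  assert (0 < / INR n) by (apply Rinv_0_lt_compat; lra).
  unfold lower_sum, Rdiv. split; [apply Rmult_le_pos; lra|].
  apply Rle_trans with (INR n * / INR n); [apply Rmult_le_compat_r; lra|].
  right. field. lra.
Qed.

Section UnitInterval.
Variable phi : T -> R.
Hypothesis hphi : forall x, 0 <= phi x <= 1.

Lemma nat_floor_scaled_le n x : (nat_floor (INR n * phi x) <= n)%nat.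
Proof.
  specialize (hphi x). pose proof (pos_INR n).
  apply Nat.lt_succ_r, nat_floor_lt; [nra|]. rewrite S_INR. nra.
Qed.

Lemma lower_sum_le_mult k n : (0 < k)%nat -> (0 < n)%nat ->
  lower_sum k phi <= lower_sum (k * n) phi.
Proof.
  intros Hk Hn. unfold lower_sum.
  assert (Hkp : 0 < INR k) by (apply lt_0_INR, Hk).
  assert (Hnp : 0 < INR n) by (apply lt_0_INR, Hn).
  assert (L : INR n * nat_integral k (fun x => nat_floor (INR k * phi x))
              <= nat_integral (k * n) (fun x => nat_floor (INR (k * n) * phi x))).
  { rewrite <- (nat_integral_widen T m hm k (k * n)) by (try apply nat_floor_scaled_le; nia).
    rewrite <- (nat_integral_scale T m hm)
      by (intro x; pose proof (nat_floor_scaled_le k x); nia).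
    apply (nat_integral_mono T m hm); [|apply nat_floor_scaled_le].
    intro x. specialize (hphi x).
    destruct (nat_floor_spec (INR k * phi x)) as [a _]; [nra|].
    assert (0 <= INR k * INR n) by nra.
    apply nat_floor_ge; rewrite !mult_INR; nra. }
  set (Y := nat_integral (k * n) _) in *. rewrite (mult_INR k n).
  replace (nat_integral k _ / INR k)
    with (INR n * nat_integral k (fun x => nat_floor (INR k * phi x)) / (INR k * INR n))
    by (field; lra).
  apply Rmult_le_compat_r; [apply Rlt_le, Rinv_0_lt_compat; nra|exact L].
Qed.

Lemma lower_sum_mult_le k n : (0 < k)%nat -> (0 < n)%nat ->
  lower_sum (k * n) phi <= lower_sum n phi + / INR n.
Proof.
  intros Hk Hn. unfold lower_sum.
  assert (Hkp : 0 < INR k) by (apply lt_0_INR, Hk).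
  assert (Hnp : 0 < INR n) by (apply lt_0_INR, Hn).
  set (fn := fun x => nat_floor (INR n * phi x)).
  assert (Hfn : forall x, (fn x <= n)%nat) by (intro x; apply nat_floor_scaled_le).
  assert (L : nat_integral (k * n) (fun x => nat_floor (INR (k * n) * phi x))
              <= INR k * (nat_integral n fn + 1)).
  { rewrite <- (nat_integral_widen T m hm (k * n) (k * n + k))
      by (try apply nat_floor_scaled_le; lia).
    apply Rle_trans with (nat_integral (k * n + k) (fun x => (k * (fn x + 1))%nat)).
    { apply (nat_integral_mono T m hm).
      - intro x. specialize (hphi x).
        destruct (nat_floor_spec (INR n * phi x)) as [_ b]; [nra|].
        assert (0 <= INR k * INR n) by nra.
        apply Nat.lt_succ_r, nat_floor_lt; [rewrite mult_INR; nra|].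
        rewrite S_INR, !mult_INR, plus_INR. simpl (INR 1). unfold fn. nra.
      - intro x. specialize (Hfn x). nia. }
    rewrite (nat_integral_scale T m hm) by (intro x; specialize (Hfn x); nia).
    rewrite (nat_integral_add T m hm) by (intro x; specialize (Hfn x); nia).
    rewrite (nat_integral_const T m hm), (nat_integral_widen T m hm n) by (assumption || nia).
    simpl (INR 1). lra. }
  set (Y := nat_integral (k * n) _) in *. rewrite (mult_INR k n).
  replace (nat_integral n fn / INR n + / INR n)
    with (INR k * (nat_integral n fn + 1) / (INR k * INR n)) by (field; lra).
  apply Rmult_le_compat_r; [apply Rlt_le, Rinv_0_lt_compat; nra|exact L].
Qed.

Lemma lower_sum_le k n : (0 < k)%nat -> (0 < n)%nat ->
  lower_sum k phi <= lower_sum n phi + / INR n.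
Proof.
  intros Hk Hn. eapply Rle_trans; [apply (lower_sum_le_mult k n)|apply lower_sum_mult_le]; auto.
Qed.
End UnitInterval.
End LowerSums.

Section Integral.
Variable T : Type.
Variable m : (T -> Prop) -> R.
Hypothesis hm : is_mean m.

Definition lower_sums (phi : T -> R) : R -> Prop :=
  fun r => exists n, r = lower_sum T m (S n) phi.

Lemma lower_sums_bound phi : bound (lower_sums phi).
Proof. exists 1. intros r [n ->]. apply (lower_sum_range T m hm). lia. Qed.

Lemma lower_sums_nonempty phi : exists r, lower_sums phi r.
Proof. exists (lower_sum T m 1 phi), O. reflexivity. Qed.

(* Meaningful for [0,1]-valued phi only; the lower sums are bounded by 1
   whatever phi is. *)
Definition integral (phi : T -> R) : R :=
  proj1_sig (completeness _ (lower_sums_bound phi) (lower_sums_nonempty phi)).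

Lemma integral_lub phi : is_lub (lower_sums phi) (integral phi).
Proof. unfold integral. apply proj2_sig. Qed.

Lemma lower_sum_le_integral phi n : (0 < n)%nat -> lower_sum T m n phi <= integral phi.
Proof.
  intro Hn. destruct n as [|n]; [lia|].
  apply (proj1 (integral_lub phi)). exists n. reflexivity.
Qed.

Lemma integral_le_lower_sum phi n : (forall x, 0 <= phi x <= 1) -> (0 < n)%nat ->
  integral phi <= lower_sum T m n phi + / INR n.
Proof.
  intros hphi Hn. apply (proj2 (integral_lub phi)).
  intros r [k ->]. apply lower_sum_le; auto. lia.
Qed.

Lemma integral_ge0 phi : 0 <= integral phi.
Proof.
  pose proof (lower_sum_le_integral phi 1 ltac:(lia)).
  pose proof (lower_sum_range T m hm 1 phi ltac:(lia)). lra.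
Qed.

Lemma integral_unique phi r c :
  (forall x, 0 <= phi x <= 1) -> 0 <= c ->
  (forall n, (0 < n)%nat -> Rabs (lower_sum T m n phi - r) <= c / INR n) ->
  integral phi = r.
Proof.
  intros hphi Hc Hr. apply Rabs_le_eps_eq. intros eps He.
  destruct (archimed_cor1 (eps / (1 + c))) as [n [Hn Hn0]];
    [apply Rdiv_lt_0_compat; lra|].
  pose proof (lower_sum_le_integral phi n Hn0).
  pose proof (integral_le_lower_sum phi n hphi Hn0).
  destruct (Rabs_le_inv _ _ (Hr n Hn0)).
  assert ((1 + c) * / INR n <= eps).
  { apply Rlt_le. apply Rmult_lt_reg_l with (/ (1 + c)); [apply Rinv_0_lt_compat; lra|].
    rewrite <- Rmult_assoc, Rinv_l, Rmult_1_l by lra. unfold Rdiv in Hn. lra. }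
  unfold Rdiv in *. apply Rabs_le. lra.
Qed.

Lemma integral_const1 : integral (fun _ => 1) = 1.
Proof.
  apply (integral_unique _ _ 0); [intro; lra|lra|]. intros n Hn.
  assert (0 < INR n) by (apply lt_0_INR, Hn).
  replace (lower_sum T m n (fun _ => 1)) with 1.
  { rewrite Rminus_diag, Rabs_R0. unfold Rdiv. lra. }
  unfold lower_sum. rewrite Rmult_1_r.
  rewrite (functional_extensionality (fun _ => nat_floor (INR n)) (fun _ => n)).
  - rewrite (nat_integral_const T m hm) by lia. field. lra.
  - intro x. apply Nat.le_antisymm.
    + apply Nat.lt_succ_r, nat_floor_lt; [lra|]. rewrite S_INR. lra.
    + apply nat_floor_ge; lra.
Qed.

Lemma lower_sum_add phi psi n :
  (forall x, 0 <= phi x) -> (forall x, 0 <= psi x) -> (forall x, phi x + psi x <= 1) ->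
  (0 < n)%nat ->
  lower_sum T m n phi + lower_sum T m n psi <= lower_sum T m n (fun x => phi x + psi x)
  <= lower_sum T m n phi + lower_sum T m n psi + / INR n.
Proof.
  intros h1 h2 h3 Hn. assert (Hnp : 0 < INR n) by (apply lt_0_INR, Hn).
  assert (hps : forall x, 0 <= phi x + psi x <= 1) by (intro x; specialize (h1 x); specialize (h2 x); specialize (h3 x); lra).
  set (f1 := fun x => nat_floor (INR n * phi x)).
  set (f2 := fun x => nat_floor (INR n * psi x)).
  set (f3 := fun x => nat_floor (INR n * (phi x + psi x))).
  assert (Hf : forall x, (f1 x + f2 x <= f3 x <= f1 x + f2 x + 1)%nat).
  { intro x. specialize (h1 x). specialize (h2 x). specialize (hps x).
    destruct (nat_floor_spec (INR n * phi x)) as [a1 b1]; [nra|].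
    destruct (nat_floor_spec (INR n * psi x)) as [a2 b2]; [nra|].
    unfold f1, f2, f3. split.
    - apply nat_floor_ge; [nra|]. rewrite plus_INR. lra.
    - apply Nat.lt_succ_r, nat_floor_lt; [nra|]. rewrite S_INR, !plus_INR. simpl. lra. }
  assert (B3 : forall x, (f3 x <= n)%nat) by (intro x; apply (nat_floor_scaled_le T _ hps)).
  assert (T1 : nat_integral T m n f1 + nat_integral T m n f2 <= nat_integral T m n f3).
  { rewrite <- (nat_integral_add T m hm) by (intro x; specialize (Hf x); specialize (B3 x); lia).
    apply (nat_integral_mono T m hm); [apply Hf|exact B3]. }
  assert (T2 : nat_integral T m n f3 <= nat_integral T m n f1 + nat_integral T m n f2 + 1).
  { assert (Hb : forall x, (f1 x + f2 x <= n)%nat) by (intro x; specialize (Hf x); specialize (B3 x); lia).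
    rewrite <- (nat_integral_widen T m hm n (S n) f3) by auto.
    apply Rle_trans with (nat_integral T m (S n) (fun x => (f1 x + f2 x + 1)%nat)).
    { apply (nat_integral_mono T m hm); [apply Hf|intro x; specialize (Hb x); lia]. }
    rewrite !(nat_integral_add T m hm) by (intro x; specialize (Hb x); lia).
    rewrite (nat_integral_const T m hm) by lia.
    rewrite !(nat_integral_widen T m hm n (S n)) by (lia || (intro x; specialize (Hb x); lia)).
    simpl (INR 1). lra. }
  assert (Hinv : 0 < / INR n) by (apply Rinv_0_lt_compat, Hnp).
  unfold lower_sum, Rdiv. fold f1 f2 f3. split; nra.
Qed.

Lemma integral_add phi psi :
  (forall x, 0 <= phi x) -> (forall x, 0 <= psi x) -> (forall x, phi x + psi x <= 1) ->
  integral (fun x => phi x + psi x) = integral phi + integral psi.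
Proof.
  intros h1 h2 h3.
  assert (hp : forall x, 0 <= phi x <= 1) by (intro x; specialize (h1 x); specialize (h2 x); specialize (h3 x); lra).
  assert (hs : forall x, 0 <= psi x <= 1) by (intro x; specialize (h1 x); specialize (h2 x); specialize (h3 x); lra).
  apply (integral_unique _ _ 2); [intro x; specialize (hp x); specialize (hs x); specialize (h3 x); lra|lra|].
  intros n Hn.
  pose proof (lower_sum_add phi psi n h1 h2 h3 Hn).
  pose proof (lower_sum_le_integral phi n Hn). pose proof (lower_sum_le_integral psi n Hn).
  pose proof (integral_le_lower_sum phi n hp Hn). pose proof (integral_le_lower_sum psi n hs Hn).
  unfold Rdiv. apply Rabs_le. lra.
Qed.

Lemma integral_comp (h : T -> T) :
  (forall A, m (fun x => A (h x)) = m A) ->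
  forall phi, integral (fun x => phi (h x)) = integral phi.
Proof.
  intros minv phi.
  assert (E : lower_sums (fun x => phi (h x)) = lower_sums phi).
  { apply pred_ext. intro r. unfold lower_sums, lower_sum.
    setoid_rewrite (nat_integral_comp T m h minv _ (fun x => nat_floor (INR _ * phi x))).
    reflexivity. }
  apply (is_lub_u (lower_sums phi)); [rewrite <- E|]; apply integral_lub.
Qed.
End Integral.

(** * Amenability is closed under extensions *)

Section Extension.
Variables N G Q : Group.
Variable i : N -> G.
Variable p : G -> Q.
Hypothesis hse : short_exact i p.
Variable mN : (N -> Prop) -> R.
Hypothesis hmN : is_mean mN.
Hypothesis mN_inv : forall (n : N) B, mN (translate n B) = mN B.

Let hi : is_hom i. Proof. apply hse. Qed.
Let hp : is_hom p. Proof. apply hse. Qed.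
Let kp : forall x, p x = gone <-> exists n, i n = x. Proof. apply hse. Qed.

(* The invariant mean of the coset g N, transported from N. *)
Definition coset_mean (A : G -> Prop) (g : G) : R := mN (fun n => A (gmul g (i n))).

Lemma coset_mean_range A g : 0 <= coset_mean A g <= 1.
Proof. apply (mean_range _ mN hmN). Qed.

Lemma coset_mean_fiber A g g' : p g = p g' -> coset_mean A g = coset_mean A g'.
Proof.
  intro E.
  assert (K : p (gmul (ginv g) g') = gone) by (rewrite hp, (hom_inv G Q p hp), E; apply gmulV).
  destruct (proj1 (kp _) K) as [n0 Hn0].
  assert (Eg : g' = gmul g (i n0)) by (rewrite Hn0; gsimp; reflexivity).
  unfold coset_mean. rewrite Eg, <- (mN_inv (ginv n0)).
  f_equal. apply pred_ext. intro n. unfold translate.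
  rewrite ginv_inv, hi, gmulA. reflexivity.
Qed.

Lemma coset_mean_add A B g : (forall x, A x -> B x -> False) ->
  coset_mean (fun x => A x \/ B x) g = coset_mean A g + coset_mean B g.
Proof. intro D. apply (mean_add _ mN hmN). intro n. apply D. Qed.
End Extension.

Lemma amenable_extension (N G Q : Group) (i : N -> G) (p : G -> Q) :
  short_exact i p -> amenable N -> amenable Q -> amenable G.
Proof.
  intros hse HN HQ.
  apply amenableP in HN as [mN [hmN mN_inv]]. apply amenableP in HQ as [mQ [hmQ mQ_inv]].
  pose proof hse as (_ & hp & _ & sp & _).
  destruct (choice _ sp) as [sec Hsec].
  set (phi := fun (A : G -> Prop) (q : Q) => coset_mean N G i mN A (sec q)).
  assert (phi_range : forall A q, 0 <= phi A q <= 1) by (intros; apply (coset_mean_range _ _ i mN hmN)).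
  apply amenableP. exists (fun A => integral Q mQ hmQ (phi A)). split; [split; [|split]|].
  - unfold phi, coset_mean. rewrite (mean_True _ mN hmN). apply (integral_const1 Q mQ hmQ).
  - intro A. apply (integral_ge0 Q mQ hmQ).
  - intros A B D.
    rewrite (functional_extensionality (phi _) (fun q => phi A q + phi B q))
      by (intro q; apply coset_mean_add; assumption).
    apply (integral_add Q mQ hmQ); try (intro q; apply phi_range).
    intro q. unfold phi. rewrite <- coset_mean_add by assumption. apply (coset_mean_range _ _ i mN hmN).
  - intros g A.
    rewrite (functional_extensionality (phi (translate g A)) (fun q => phi A (gmul (p (ginv g)) q))).
    + apply (integral_comp Q mQ hmQ). intro B.
      rewrite (hom_inv G Q p hp). apply (mQ_inv (p g)).
    + intro q. unfold phi.
      rewrite (coset_mean_fiber N G Q i p hse mN mN_inv A (sec (gmul (p (ginv g)) q))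
                 (gmul (ginv g) (sec q))) by (rewrite hp, !Hsec; reflexivity).
      unfold coset_mean, translate. f_equal. apply pred_ext. intro n. rewrite gmulA. reflexivity.
Qed.

Definition normal_set {G : Group} (M : G -> Prop) : Prop :=
  M gone /\ (forall x y, M x -> M y -> M (gmul x y)) /\ (forall x, M x -> M (ginv x)) /\
  (forall g x, M x -> M (gmul (gmul g x) (ginv g))).

Section Quotient.
Variable G : Group.
Variable M : G -> Prop.
Hypothesis hM : normal_set M.

Let M1 : M gone. Proof. apply hM. Qed.
Let Mmul : forall x y, M x -> M y -> M (gmul x y). Proof. apply hM. Qed.
Let Minv : forall x, M x -> M (ginv x). Proof. apply hM. Qed.
Let Mconj : forall g x, M x -> M (gmul (gmul g x) (ginv g)). Proof. apply hM. Qed.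

(* Cosets are represented by their (extensional) membership predicates. *)
Definition coset (x : G) : G -> Prop := fun y => M (gmul (ginv x) y).
Definition quotient_carrier : Type := {C : G -> Prop | exists x, C = coset x}.
Definition cls (x : G) : quotient_carrier := exist _ (coset x) (ex_intro _ x eq_refl).

Lemma cls_eq x y : cls x = cls y <-> M (gmul (ginv x) y).
Proof.
  split.
  - intro E. apply (f_equal (@proj1_sig _ _)) in E. simpl in E.
    change (coset x y). rewrite E. unfold coset. rewrite gmulV. exact M1.
  - intro H. unfold cls.
    assert (E : coset x = coset y).
    { apply pred_ext. intro z. unfold coset. split; intro Hz.
      - replace (gmul (ginv y) z) with (gmul (ginv (gmul (ginv x) y)) (gmul (ginv x) z))
          by (gsimp; reflexivity).
        apply Mmul; auto.
      - replace (gmul (ginv x) z) with (gmul (gmul (ginv x) y) (gmul (ginv y) z))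
          by (gsimp; reflexivity).
        apply Mmul; auto. }
    revert H. generalize (ex_intro (fun x0 : G => coset x = coset x0) x eq_refl).
    generalize (ex_intro (fun x0 : G => coset y = coset x0) y eq_refl).
    rewrite E. intros e1 e2 _. f_equal. apply proof_irrelevance.
Qed.

Definition rep (C : quotient_carrier) : G :=
  proj1_sig (constructive_indefinite_description _ (proj2_sig C)).

Lemma cls_rep C : cls (rep C) = C.
Proof.
  unfold rep. destruct (constructive_indefinite_description _ (proj2_sig C)) as [x Hx]. simpl.
  destruct C as [C0 HC]. simpl in Hx. subst C0. unfold cls. f_equal. apply proof_irrelevance.
Qed.

Lemma cls_ind (P : quotient_carrier -> Prop) : (forall x, P (cls x)) -> forall C, P C.
Proof. intros H C. rewrite <- (cls_rep C). apply H. Qed.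

Lemma rep_cls x : M (gmul (ginv x) (rep (cls x))).
Proof. apply cls_eq. rewrite cls_rep. reflexivity. Qed.

Definition qmul (C D : quotient_carrier) : quotient_carrier := cls (gmul (rep C) (rep D)).
Definition qinv (C : quotient_carrier) : quotient_carrier := cls (ginv (rep C)).

Lemma qmul_cls x y : qmul (cls x) (cls y) = cls (gmul x y).
Proof.
  unfold qmul. apply cls_eq.
  pose proof (rep_cls x) as a. pose proof (rep_cls y) as b.
  set (x' := rep (cls x)) in *. set (y' := rep (cls y)) in *.
  replace (gmul (ginv (gmul x' y')) (gmul x y)) with
    (gmul (gmul (gmul (ginv y') (ginv (gmul (ginv x) x'))) (ginv (ginv y')))
          (ginv (gmul (ginv y) y'))) by (gsimp; reflexivity).
  apply Mmul; [apply Mconj, Minv, a|apply Minv, b].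
Qed.

Lemma qinv_cls x : qinv (cls x) = cls (ginv x).
Proof.
  unfold qinv. apply cls_eq. pose proof (rep_cls x) as a. set (x' := rep (cls x)) in *.
  replace (gmul (ginv (ginv x')) (ginv x)) with (gmul (gmul x (gmul (ginv x) x')) (ginv x))
    by (gsimp; reflexivity).
  apply Mconj, a.
Qed.

Definition quotient : Group.
Proof.
  refine {| gcar := quotient_carrier; gmul := qmul; gone := cls gone; ginv := qinv |}.
  - intros C D E. revert C. apply cls_ind. intro x. revert D. apply cls_ind. intro y.
    revert E. apply cls_ind. intro z. rewrite !qmul_cls, gmulA. reflexivity.
  - apply cls_ind. intro x. rewrite qmul_cls, gmul1. reflexivity.
  - apply cls_ind. intro x. rewrite qinv_cls, qmul_cls, gmulV. reflexivity.
Defined.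

Definition qproj : G -> quotient := cls.

Lemma qproj_hom : is_hom qproj.
Proof. intros x y. symmetry. apply qmul_cls. Qed.

Lemma qproj_surj : surjective qproj.
Proof. intro C. exists (rep C). apply cls_rep. Qed.

Lemma qproj_eq x y : qproj x = qproj y <-> M (gmul (ginv x) y).
Proof. apply cls_eq. Qed.

Lemma qproj_eq1 x : qproj x = gone <-> M x.
Proof.
  change (@gone quotient) with (cls gone). unfold qproj. rewrite cls_eq, gmul1_r.
  split; intro H; [rewrite <- (ginv_inv G x)|]; apply Minv; exact H.
Qed.
End Quotient.

Arguments qproj {G} M hM.

Section Kernel.
Variables G H : Group.
Variable f : G -> H.
Hypothesis hf : is_hom f.

Definition kernel_carrier : Type := {x : G | f x = gone}.

Lemma kernel_val_inj (a b : kernel_carrier) : proj1_sig a = proj1_sig b -> a = b.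
Proof. destruct a as [a pa], b as [b pb]. simpl. intros ->. f_equal. apply proof_irrelevance. Qed.

Definition kmul (a b : kernel_carrier) : kernel_carrier.
Proof.
  exists (gmul (proj1_sig a) (proj1_sig b)).
  rewrite hf, (proj2_sig a), (proj2_sig b). apply gmul1.
Defined.

Definition kinv (a : kernel_carrier) : kernel_carrier.
Proof. exists (ginv (proj1_sig a)). rewrite (hom_inv G H f hf), (proj2_sig a). apply ginv_one. Defined.

Definition kernel : Group.
Proof.
  refine {| gcar := kernel_carrier; gmul := kmul;
            gone := exist _ gone (hom_one G H f hf); ginv := kinv |};
    intros; apply kernel_val_inj; simpl; [apply gmulA|apply gmul1|apply gmulV].
Defined.

Definition kernel_incl : kernel -> G := fun a => proj1_sig a.

Lemma kernel_short_exact : surjective f -> short_exact kernel_incl f.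
Proof.
  intro sf. split; [|split; [exact hf|split; [|split; [exact sf|]]]].
  - intros a b. reflexivity.
  - intros a b. apply kernel_val_inj.
  - intro x. split.
    + intro Hx. exists (exist _ x Hx). reflexivity.
    + intros [[y Hy] <-]. exact Hy.
Qed.

Lemma kernel_abelian :
  (forall x y : G, f x = gone -> f y = gone -> gmul x y = gmul y x) -> abelian kernel.
Proof. intros Hc [a pa] [b pb]. apply kernel_val_inj. simpl. auto. Qed.
End Kernel.

Lemma derived_subgroup (G : Group) j :
  derived G j gone /\
  (forall x y, derived G j x -> derived G j y -> derived G j (gmul x y)) /\
  (forall x, derived G j x -> derived G j (ginv x)).
Proof.
  destruct j; simpl; [auto|].
  split; [apply gen_one|split; [apply gen_mul|apply gen_inv]].
Qed.

Lemma derived_hom (G H : Group) (f : G -> H) :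
  is_hom f -> forall j x, derived G j x -> derived H j (f x).
Proof.
  intros hf j. induction j as [|j IH]; simpl; [auto|].
  intros x Hx. induction Hx as [z [x [y [hx [hy ->]]]]| |a b _ IHa _ IHb|a _ IHa].
  - apply gen_in. exists (f x), (f y). split; [auto|split; [auto|]].
    unfold commg. rewrite !hf, !(hom_inv G H f hf). reflexivity.
  - rewrite (hom_one G H f hf). apply gen_one.
  - rewrite hf. apply gen_mul; assumption.
  - rewrite (hom_inv G H f hf). apply gen_inv. assumption.
Qed.

Lemma derived_succ_sub (G : Group) j x : derived G (S j) x -> derived G j x.
Proof.
  simpl. destruct (derived_subgroup G j) as [d1 [dm di]].
  intro Hx. induction Hx as [z [x [y [hx [hy ->]]]]| | |]; auto.
  unfold commg. apply dm; apply dm; auto.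
Qed.

Lemma abelian_solvable (A : Group) : abelian A -> solvable A.
Proof.
  intro comm. exists 1%nat. intros x Hx. simpl in Hx.
  induction Hx as [z [x [y [_ [_ ->]]]]| |a b _ IHa _ IHb|a _ IHa].
  - unfold commg. rewrite (comm x y). gsimp. reflexivity.
  - reflexivity.
  - rewrite IHa, IHb. apply gmul1.
  - rewrite IHa. apply ginv_one.
Qed.

(** * Quotients of G by the derived subgroups of N *)

Definition abelian_quo_ext_closed (C : Group -> Prop) : Prop :=
  (forall (G H : Group) (f : G -> H), is_hom f -> surjective f -> C G -> C H) /\
  (forall (N G Q : Group) (i : N -> G) (p : G -> Q), short_exact i p -> C N -> C Q -> C G) /\
  (forall A : Group, abelian A -> C A).

Section DerivedQuotients.
Variables N G Q : Group.
Variable i : N -> G.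
Variable p : G -> Q.
Hypothesis hse : short_exact i p.

Let hi : is_hom i. Proof. apply hse. Qed.
Let hp : is_hom p. Proof. apply hse. Qed.
Let ii : injective i. Proof. apply hse. Qed.
Let sp : surjective p. Proof. apply hse. Qed.
Let kp : forall x, p x = gone <-> exists n, i n = x. Proof. apply hse. Qed.

Definition image_derived (j : nat) : G -> Prop := fun x => exists n, derived N j n /\ i n = x.

Lemma conj_in_image (g : G) (a : N) : exists c, i c = gmul (gmul g (i a)) (ginv g).
Proof.
  apply kp. rewrite !hp, (hom_inv G Q p hp).
  assert (E : p (i a) = gone) by (apply kp; eauto). rewrite E, gmul1_r, gmulV_r. reflexivity.
Qed.

(* Conjugation by g restricts to an endomorphism of N, which maps N^(j) into itself. *)
Lemma image_derived_normal j : normal_set (image_derived j).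
Proof.
  destruct (derived_subgroup N j) as [d1 [dm di]].
  split; [|split; [|split]].
  - exists gone. split; [exact d1|apply (hom_one N G i hi)].
  - intros x y [a [ha <-]] [b [hb <-]]. exists (gmul a b). auto.
  - intros x [a [ha <-]]. exists (ginv a). split; [auto|apply (hom_inv N G i hi)].
  - intros g x [a [ha <-]].
    destruct (choice _ (conj_in_image g)) as [c Hc].
    assert (hc : is_hom c) by (intros u v; apply ii; rewrite hi, !Hc, hi; gsimp; reflexivity).
    exists (c a). split; [apply (derived_hom N N c hc), ha|apply Hc].
Qed.

Definition Gmod (j : nat) : Group := quotient G (image_derived j) (image_derived_normal j).
Definition proj (j : nat) : G -> Gmod j := qproj (image_derived j) (image_derived_normal j).

Lemma proj_hom j : is_hom (proj j).
Proof. apply qproj_hom. Qed.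

Lemma proj_surj j : surjective (proj j).
Proof. apply qproj_surj. Qed.

Lemma proj_eq1 j x : proj j x = gone <-> image_derived j x.
Proof. apply qproj_eq1. Qed.

Lemma proj_eq j x y : proj j x = proj j y <-> image_derived j (gmul (ginv x) y).
Proof. apply qproj_eq. Qed.

Definition step (j : nat) (X : Gmod (S j)) : Gmod j :=
  proj j (rep G (image_derived (S j)) X).

Lemma step_proj j x : step j (proj (S j) x) = proj j x.
Proof.
  unfold step. symmetry. apply proj_eq.
  destruct (rep_cls G _ (image_derived_normal (S j)) x) as [a [ha Ha]].
  exists a. split; [apply derived_succ_sub, ha|exact Ha].
Qed.

Lemma step_hom j : is_hom (step j).
Proof.
  intros X Y. destruct (proj_surj (S j) X) as [x <-]. destruct (proj_surj (S j) Y) as [y <-].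
  rewrite <- proj_hom, !step_proj. apply proj_hom.
Qed.

Lemma step_surj j : surjective (step j).
Proof. intro Y. destruct (proj_surj j Y) as [x <-]. exists (proj (S j) x). apply step_proj. Qed.

(* The kernel of each step is the image of N^(j)/N^(j+1), which is abelian. *)
Lemma step_kernel_abelian j : abelian (kernel _ _ (step j) (step_hom j)).
Proof.
  apply kernel_abelian. intros X Y.
  destruct (proj_surj (S j) X) as [x <-]. destruct (proj_surj (S j) Y) as [y <-].
  rewrite !step_proj, !proj_eq1. intros [a [ha <-]] [b [hb <-]].
  rewrite <- !proj_hom. apply proj_eq.
  exists (commg b a). split.
  - apply gen_in. exists b, a. auto.
  - unfold commg. rewrite !hi, !(hom_inv N G i hi). gsimp. reflexivity.
Qed.

Lemma Gmod0_quotient_of_Q : exists f : Q -> Gmod 0, is_hom f /\ surjective f.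
Proof.
  destruct (choice _ sp) as [sec Hsec].
  assert (M0 : forall x, image_derived 0 x <-> p x = gone).
  { intro x. rewrite kp. unfold image_derived. simpl. split; intros [n Hn]; exists n; tauto. }
  exists (fun q => proj 0 (sec q)). split.
  - intros a b. rewrite <- proj_hom. apply proj_eq, M0.
    rewrite hp, (hom_inv G Q p hp), !hp, !Hsec. gsimp. reflexivity.
  - intro Y. destruct (proj_surj 0 Y) as [x <-]. exists (p x). apply proj_eq, M0.
    rewrite hp, (hom_inv G Q p hp), Hsec, gmulV. reflexivity.
Qed.

Lemma Gmod_in_closed_class (C : Group -> Prop) :
  abelian_quo_ext_closed C -> C Q -> forall j, C (Gmod j).
Proof.
  intros [Cquo [Cext Cab]] CQ j. induction j as [|j IH].
  - destruct Gmod0_quotient_of_Q as [f [hf sf]]. exact (Cquo _ _ f hf sf CQ).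
  - apply (Cext _ _ _ _ (step j) (kernel_short_exact _ _ _ (step_hom j) (step_surj j))).
    + apply Cab, step_kernel_abelian.
    + exact IH.
Qed.
End DerivedQuotients.

Lemma residually_of_extension (C : Group -> Prop) :
  abelian_quo_ext_closed C ->
  forall (N G Q : Group) (i : N -> G) (p : G -> Q),
    short_exact i p -> residually solvable N -> C Q -> residually C G.
Proof.
  intros hC N G Q i p hse Hres CQ g Hg.
  pose proof hse as (hi & hp & ii & _ & kp).
  destruct (classic (p g = gone)) as [Hpg|Hpg].
  - destruct (proj1 (kp g) Hpg) as [n0 <-].
    assert (Hn : n0 <> gone) by (intro E; apply Hg; rewrite E; apply (hom_one N G i hi)).
    destruct (Hres n0 Hn) as [Sv [f [[k Hk] [hf [_ Hfn]]]]].
    exists (Gmod N G Q i p hse k), (proj N G Q i p hse k).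
    split; [apply Gmod_in_closed_class; assumption|].
    split; [apply proj_hom|split; [apply proj_surj|]].
    rewrite proj_eq1. intros [n [hn En]]. apply ii in En. subst n.
    apply Hfn, Hk, (derived_hom N Sv f hf), hn.
  - exists Q, p. split; [exact CQ|split; [exact hp|split; [apply hse|exact Hpg]]].
Qed.

Lemma amenable_closed : abelian_quo_ext_closed amenable.
Proof.
  split; [|split].
  - exact amenable_image.
  - exact amenable_extension.
  - exact abelian_amenable.
Qed.

Lemma elementary_amenable_closed : abelian_quo_ext_closed elementary_amenable.
Proof.
  split; [|split].
  - intros G H f hf sf HG C hC. pose proof hC as (_ & _ & _ & Cquo & _).
    exact (Cquo G H f hf sf (HG C hC)).
  - intros N G Q i p hse HN HQ C hC. pose proof hC as (_ & _ & _ & _ & Cext & _).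
    exact (Cext N G Q i p hse (HN C hC) (HQ C hC)).
  - intros A comm C hC. pose proof hC as (_ & Csol & _).
    exact (Csol A (abelian_solvable A comm)).
Qed.

Theorem lemma1p3 :
  (forall (N G Q : Group) (i : N -> G) (p : G -> Q),
      short_exact i p -> residually solvable N -> amenable Q ->
      residually amenable G) /\
  (forall (N G Q : Group) (i : N -> G) (p : G -> Q),
      short_exact i p -> residually solvable N -> elementary_amenable Q ->
      residually elementary_amenable G).
Proof.
  split; apply residually_of_extension.
  - exact amenable_closed.
  - exact elementary_amenable_closed.
Qed.
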